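(* Let $D$ be a locally finite connected C-homogeneous digraph and let $x\in VD$. If $N^+(x)$ or $N^-(x)$ consists of precisely one vertex, then $D$ is either an infinite tree or a directed cycle.
   Context: A digraph has an irreflexive, antisymmetric edge relation; connectedness, local finiteness and being a tree refer to the underlying undirected graph. $D$ is C-homogeneous if every isomorphism between finite connected induced subdigraphs extends to an automorphism of $D$. $N^+(x)=\{y: xy\in ED\}$, $N^-(x)=\{y: yx\in ED\}$. *)

From Stdlib Require Import List Arith Relations.
Import ListNotations.

Section Digraph.
Set Implicit Arguments.
Context {V : Type}.
Variable E : V -> V -> Prop.

Definition is_digraph : Prop :=
  (forall x, ~ E x x) /\ (forall x y, E x y -> E y x -> x = y).

Definition adj (x y : V) : Prop := E x y \/ E y x.

Definition finite_set (A : V -> Prop) : Prop :=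
  exists l : list V, forall x, A x -> In x l.

Definition infinite_vertices : Prop := ~ finite_set (fun _ => True).

Definition locally_finite : Prop :=
  forall x, finite_set (fun y => adj x y).

Definition adj_in (A : V -> Prop) (x y : V) : Prop := A x /\ A y /\ adj x y.

Definition connected_in (A : V -> Prop) : Prop :=
  forall a b, A a -> A b -> clos_refl_trans V (adj_in A) a b.

Definition connected : Prop := connected_in (fun _ => True).

Definition out_nbh (x : V) : V -> Prop := fun y => E x y.
Definition in_nbh (x : V) : V -> Prop := fun y => E y x.

Definition singleton_set (S : V -> Prop) : Prop :=
  exists y, forall z, S z <-> z = y.

(* f restricted to A is an isomorphism of induced subdigraphs D[A] -> D[B] *)
Definition induced_iso (A B : V -> Prop) (f : V -> V) : Prop :=
  (forall a, A a -> B (f a)) /\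
  (forall a a', A a -> A a' -> f a = f a' -> a = a') /\
  (forall b, B b -> exists a, A a /\ f a = b) /\
  (forall a a', A a -> A a' -> (E a a' <-> E (f a) (f a'))).

Definition automorphism (g : V -> V) : Prop :=
  (forall x y, g x = g y -> x = y) /\
  (forall y, exists x, g x = y) /\
  (forall x y, E x y <-> E (g x) (g y)).

Definition C_homogeneous : Prop :=
  forall (A B : V -> Prop) (f : V -> V),
    finite_set A -> finite_set B -> connected_in A -> connected_in B ->
    induced_iso A B f ->
    exists g, automorphism g /\ forall a, A a -> g a = f a.

Definition undirected_cycle (l : list V) : Prop :=
  3 <= length l /\ NoDup l /\
  (forall i, S i < length l ->
     exists u w, nth_error l i = Some u /\ nth_error l (S i) = Some w /\ adj u w) /\
  (exists u w, hd_error l = Some u /\ nth_error l (length l - 1) = Some w /\ adj w u).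

Definition is_tree : Prop := connected /\ forall l, ~ undirected_cycle l.

Definition directed_cycle : Prop :=
  exists (n : nat) (f : nat -> V),
    3 <= n /\
    (forall i j, i < n -> j < n -> f i = f j -> i = j) /\
    (forall v, exists i, i < n /\ f i = v) /\
    (forall x y, E x y <-> exists i, i < n /\ x = f i /\ y = f ((S i) mod n)).

End Digraph.

(* C-homogeneity makes D vertex-transitive, so if one vertex has a single out-neighbour (the
   in-neighbour case is the same statement for the reversed digraph), the arcs of D form the graph
   of a map s.  In such a functional digraph the arcs along a walk without backtracking can only
   switch from forward to backward, so every cycle of the underlying graph is a directed cycle, i.e. an orbit of s.  Without
   periodic points D is therefore a tree, and it is infinite because the s-orbit of any vertex is.
   If some orbit is periodic, C-homogeneity yields an automorphism fixing a cycle vertex x and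
   mapping any in-neighbour y of x to the cycle predecessor p of x; it commutes with s and so
   fixes p, whence y = p.  Thus the cycle is closed under taking neighbours, and by
   connectedness it is all of D. *)
From Stdlib Require Import List Arith Lia Relations Wf_nat Classical ClassicalEpsilon FinFun.
Import ListNotations.

Lemma clos_refl_trans_mono {A} (R R' : relation A) a b :
  inclusion A R R' -> clos_refl_trans A R a b -> clos_refl_trans A R' a b.
Proof.
  intros HR H; induction H; [apply rt_step; auto | apply rt_refl | eapply rt_trans; eauto].
Qed.

Lemma clos_refl_trans_exit {A} (R : relation A) (P : A -> Prop) a b :
  clos_refl_trans A R a b -> P a -> ~ P b -> exists x y, R x y /\ P x /\ ~ P y.
Proof.
  intros H. apply clos_rt_rt1n in H. induction H as [|a y b Ray _ IH]; intros Pa Pb.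
  - contradiction.
  - destruct (classic (P y)); eauto.
Qed.

Lemma iter_mul {A} (f : A -> A) v k q : Nat.iter k f v = v -> Nat.iter (k * q) f v = v.
Proof.
  intros Hv. induction q as [|q IH]; [rewrite Nat.mul_0_r; reflexivity|].
  rewrite Nat.mul_succ_r, Nat.iter_add, Hv. exact IH.
Qed.

Lemma iter_mod {A} (f : A -> A) v k : Nat.iter k f v = v ->
  forall i, Nat.iter i f v = Nat.iter (i mod k) f v.
Proof.
  intros Hv i. pose proof (Nat.div_mod_eq i k) as Hdiv.
  transitivity (Nat.iter (i mod k + k * (i / k)) f v); [f_equal; lia|].
  rewrite Nat.iter_add, iter_mul by exact Hv. reflexivity.
Qed.

Lemma iter_comm {A} (f : A -> A) i j v :
  Nat.iter i f (Nat.iter j f v) = Nat.iter j f (Nat.iter i f v).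
Proof. rewrite <- !Nat.iter_add, Nat.add_comm. reflexivity. Qed.

Lemma infinite_of_injective {V} (f : nat -> V) : Injective f -> @infinite_vertices V.
Proof.
  intros Hf [L HL].
  assert (Hnd : NoDup (map f (seq 0 (S (length L))))).
  { apply Injective_map_NoDup; [exact Hf | apply seq_NoDup]. }
  apply NoDup_incl_length with (l' := L) in Hnd; [|intros z _; apply HL; exact I].
  rewrite length_map, length_seq in Hnd. lia.
Qed.

Lemma succ_mod_rev n i : i < n -> S (n - 1 - S i mod n) mod n = n - 1 - i.
Proof.
  intros Hi. destruct (Nat.eq_dec i (n - 1)) as [->|Hne].
  - assert (Hn : S (n - 1) = n) by lia.
    rewrite Hn, Nat.Div0.mod_same, Nat.sub_0_r, Hn, Nat.Div0.mod_same. lia.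
  - rewrite (Nat.mod_small (S i)), Nat.mod_small; lia.
Qed.

Section CHomogeneous.
Variables (V : Type) (E : V -> V -> Prop).
Hypothesis HE : is_digraph E.
Hypothesis HC : C_homogeneous E.

Lemma vertex_transitive x y : exists g, automorphism E g /\ g x = y.
Proof.
  destruct HE as [Hirr _].
  destruct (HC (fun z => z = x) (fun z => z = y) (fun _ => y)) as [g [Hg Hgf]].
  - exists [x]; intros z ->; simpl; auto.
  - exists [y]; intros z ->; simpl; auto.
  - intros a b -> ->; apply rt_refl.
  - intros a b -> ->; apply rt_refl.
  - split; [|split; [|split]].
    + reflexivity.
    + intros a a' -> ->; reflexivity.
    + intros b ->; exists x; auto.
    + intros a a' -> ->; split; intro H; exfalso; eapply Hirr; eassumption.
  - exists g; auto.
Qed.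

Lemma finite_pair (a b : V) : finite_set (fun z => z = a \/ z = b).
Proof. exists [a; b]. intros z [-> | ->]; simpl; auto. Qed.

Lemma connected_in_arc a b : E a b -> connected_in E (fun z => z = a \/ z = b).
Proof.
  intros Hab u w [-> | ->] [-> | ->]; try apply rt_refl; apply rt_step;
    repeat split; auto; [left | right]; exact Hab.
Qed.

Lemma arc_transitive a b c d : E a b -> E c d ->
  exists g, automorphism E g /\ g a = c /\ g b = d.
Proof.
  destruct HE as [Hirr Hanti]. intros Hab Hcd.
  assert (Hba : ~ E b a) by (intros H; apply (Hirr a); rewrite (Hanti _ _ Hab H) at 2; exact Hab).
  assert (Hdc : ~ E d c) by (intros H; apply (Hirr c); rewrite (Hanti _ _ Hcd H) at 2; exact Hcd).
  assert (Hcd' : c <> d) by (intros ->; exact (Hirr _ Hcd)).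
  set (f := fun z => if excluded_middle_informative (z = a) then c else d).
  assert (fa : f a = c) by (unfold f; destruct excluded_middle_informative; congruence).
  assert (fb : f b = d) by (unfold f; destruct excluded_middle_informative; congruence).
  destruct (HC _ _ f (finite_pair a b) (finite_pair c d)
              (connected_in_arc _ _ Hab) (connected_in_arc _ _ Hcd)) as [g [Hg Hgf]].
  - split; [|split; [|split]].
    + intros z [-> | ->]; [rewrite fa | rewrite fb]; auto.
    + intros z z' [-> | ->] [-> | ->]; rewrite ?fa, ?fb; congruence.
    + intros z [-> | ->]; eauto.
    + intros z z' [-> | ->] [-> | ->]; rewrite ?fa, ?fb;
        split; intros H; solve [auto | exfalso; eapply Hirr; eassumption | contradiction].
  - exists g. rewrite !Hgf by auto. auto.
Qed.

Lemma functional_of_singleton_out_nbh x :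
  singleton_set (out_nbh E x) -> exists s, forall a b, E a b <-> b = s a.
Proof.
  intros [y Hy].
  assert (H : forall a, exists y', forall z, E a z <-> z = y').
  { intros a. destruct (vertex_transitive x a) as [g [[_ [Hgs Hge]] <-]].
    exists (g y). intros z. split.
    - intros Hz. destruct (Hgs z) as [w <-]. apply Hge, Hy in Hz. congruence.
    - intros ->. apply (proj1 (Hge _ _)), Hy. reflexivity. }
  exists (fun a => proj1_sig (constructive_indefinite_description _ (H a))).
  intros a. exact (proj2_sig (constructive_indefinite_description _ (H a))).
Qed.

End CHomogeneous.

Section Functional.
Variables (V : Type) (E : V -> V -> Prop) (s : V -> V).
Hypothesis HE : is_digraph E.
Hypothesis Hs : forall x y, E x y <-> y = s x.

Definition has_periodic_point : Prop := exists v k, 0 < k /\ Nat.iter k s v = v.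

Lemma arc_succ x : E x (s x).
Proof. apply Hs; reflexivity. Qed.

Lemma out_arcs_eq v u w : E v u -> E v w -> u = w.
Proof. intros Hu Hw. apply Hs in Hu, Hw. congruence. Qed.

Lemma automorphism_iter g : automorphism E g ->
  forall j z, g (Nat.iter j s z) = Nat.iter j s (g z).
Proof.
  intros [_ [_ Hg]] j. induction j as [|j IH]; intros z; [reflexivity|].
  rewrite !Nat.iter_succ, <- IH. apply Hs, (proj1 (Hg _ _)), arc_succ.
Qed.

Lemma iter_injective_of_aperiodic v :
  ~ has_periodic_point -> Injective (fun i => Nat.iter i s v).
Proof.
  intros Hnp.
  assert (Hlt : forall i j, i < j -> Nat.iter i s v <> Nat.iter j s v).
  { intros i j Hij Heq. apply Hnp. exists (Nat.iter i s v), (j - i). split; [lia|].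
    rewrite <- Nat.iter_add, Nat.sub_add by lia. auto. }
  intros i j Heq. destruct (lt_eq_lt_dec i j) as [[Hij | ] | Hij]; auto.
  - contradiction (Hlt _ _ Hij Heq).
  - contradiction (Hlt _ _ Hij (eq_sym Heq)).
Qed.

Lemma iter_forward_walk (b : nat -> V) n :
  (forall i, i < n -> E (b i) (b (S i))) -> Nat.iter n s (b 0) = b n.
Proof.
  induction n as [|n IH]; intros Hf; [reflexivity|].
  rewrite Nat.iter_succ, IH by (intros; apply Hf; lia).
  symmetry. apply Hs, Hf. lia.
Qed.

Lemma iter_backward_walk (b : nat -> V) n :
  (forall i, i < n -> E (b (S i)) (b i)) -> Nat.iter n s (b n) = b 0.
Proof.
  intros Hb. pose proof (iter_forward_walk (fun i => b (n - i)) n) as Hrev.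
  cbv beta in Hrev. rewrite Nat.sub_0_r, Nat.sub_diag in Hrev. apply Hrev.
  intros i Hi. replace (n - i) with (S (n - S i)) by lia. apply Hb. lia.
Qed.

(* Since two arcs leaving the same vertex coincide, on a walk without immediate backtracking a
   forward arc forces the previous arc forward and a backward arc forces the next one backward. *)
Section Walk.
Variables (b : nat -> V) (n : nat).
Hypothesis Hwalk : forall i, i < n -> adj E (b i) (b (S i)).
Hypothesis Hnobacktrack : forall i, S i < n -> b i <> b (S (S i)).

Lemma walk_forward_before m : m < n -> E (b m) (b (S m)) ->
  forall i, i <= m -> E (b i) (b (S i)).
Proof.
  intros Hm Hf. enough (H : forall d i, i + d = m -> E (b i) (b (S i))).
  { intros i Hi. apply (H (m - i)). lia. }
  induction d as [|d IH]; intros i Hid.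
  - replace i with m by lia. exact Hf.
  - destruct (Hwalk i) as [H | H]; [lia | exact H |].
    contradiction (Hnobacktrack i ltac:(lia)).
    apply (out_arcs_eq (b (S i))); [exact H | apply IH; lia].
Qed.

Lemma walk_backward_after : E (b 1) (b 0) ->
  forall i, i < n -> E (b (S i)) (b i).
Proof.
  intros H0. induction i as [|i IH]; intros Hi; [exact H0|].
  destruct (Hwalk (S i)) as [H | H]; [lia | | exact H].
  contradiction (Hnobacktrack i ltac:(lia)).
  apply (out_arcs_eq (b (S i))); [apply IH; lia | exact H].
Qed.

End Walk.

Lemma closed_walk_periodic (b : nat -> V) m : 3 <= m -> b m = b 0 ->
  (forall i j, i < m -> j < m -> b i = b j -> i = j) ->
  (forall i, i < m -> adj E (b i) (b (S i))) -> has_periodic_point.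
Proof.
  intros Hm Hclosed Hinj Hwalk.
  assert (Hnb : forall i, S i < m -> b i <> b (S (S i))).
  { intros i Hi Heq. destruct (Nat.eq_dec (S (S i)) m) as [Him | Him].
    - rewrite Him, Hclosed in Heq. apply Hinj in Heq; lia.
    - apply Hinj in Heq; lia. }
  destruct m as [|m]; [lia|].
  destruct (Hwalk m) as [Hf | Hb]; [lia | |].
  - exists (b 0), (S m). split; [lia|].
    rewrite iter_forward_walk; [exact Hclosed|].
    intros i Hi. apply (walk_forward_before b (S m) Hwalk Hnb m); [lia | exact Hf | lia].
  - assert (Hb1 : E (b 1) (b 0)).
    { destruct (Hwalk 0) as [H | H]; [lia | | exact H].
      rewrite Hclosed in Hb. assert (H1m := out_arcs_eq _ _ _ H Hb).
      apply Hinj in H1m; lia. }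
    exists (b (S m)), (S m). split; [lia|].
    rewrite iter_backward_walk; [symmetry; exact Hclosed|].
    exact (walk_backward_after b (S m) Hwalk Hnb Hb1).
Qed.

Lemma undirected_cycle_periodic l : undirected_cycle E l -> has_periodic_point.
Proof.
  intros [Hlen [Hnd [Hcons [u [w [Hhd [Hlast Hwu]]]]]]].
  destruct l as [|d l']; [simpl in Hlen; lia|]. set (l := d :: l') in *.
  assert (Hl : 0 < length l) by (simpl; lia).
  apply (closed_walk_periodic (fun i => nth (i mod length l) l d) (length l) Hlen).
  - rewrite Nat.Div0.mod_same, Nat.Div0.mod_0_l. reflexivity.
  - intros i j Hi Hj. rewrite !Nat.mod_small by assumption.
    apply (NoDup_nth l d); assumption.
  - intros i Hi. rewrite (Nat.mod_small i) by assumption.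
    destruct (Nat.eq_dec (S i) (length l)) as [Hil | Hil].
    + rewrite Hil, Nat.Div0.mod_same. replace i with (length l - 1) by lia.
      rewrite (nth_error_nth _ _ d Hlast). simpl in Hhd |- *. injection Hhd as <-. exact Hwu.
    + rewrite Nat.mod_small by lia.
      destruct (Hcons i ltac:(lia)) as [u' [w' [Hu [Hw Huw]]]].
      rewrite (nth_error_nth _ _ d Hu), (nth_error_nth _ _ d Hw). exact Huw.
Qed.

Section Periodic.
Hypothesis Hconn : connected E.
Hypothesis HC : C_homogeneous E.

Lemma in_arc_of_periodic_point x y k : 0 < k -> Nat.iter k s x = x -> E y x ->
  y = Nat.iter (k - 1) s x.
Proof.
  intros Hk Hx Hyx. set (p := Nat.iter (k - 1) s x).
  assert (Hpx : E p x).
  { apply Hs. rewrite <- Hx at 1. replace k with (S (k - 1)) by lia. reflexivity. }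
  destruct (arc_transitive V E HE HC y x p x Hyx Hpx) as [g [Hg [Hgy Hgx]]].
  assert (Hgp : g p = p) by (unfold p at 1; rewrite automorphism_iter, Hgx by exact Hg; reflexivity).
  destruct Hg as [Hginj _]. apply Hginj. congruence.
Qed.

Lemma orbit_covers v k : 0 < k -> Nat.iter k s v = v ->
  forall w, exists i, w = Nat.iter i s v.
Proof.
  intros Hk Hv w. apply NNPP; intro Hw.
  destruct (clos_refl_trans_exit _ (fun z => exists i, z = Nat.iter i s v) v w
              (Hconn v w I I)) as [x [y [[_ [_ [Hxy | Hyx]]] [[i ->] Hy]]]];
    [exists 0; reflexivity | exact Hw | |].
  - apply Hy. exists (S i). apply Hs, Hxy.
  - apply Hy. exists (k - 1 + i). rewrite Nat.iter_add.
    apply (in_arc_of_periodic_point _ _ k Hk); [|exact Hyx].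
    rewrite iter_comm, Hv. reflexivity.
Qed.

Lemma period_ge_3 v k : 0 < k -> Nat.iter k s v = v -> 3 <= k.
Proof.
  destruct HE as [Hirr Hanti]. intros Hk Hv.
  destruct k as [|[|[|k]]]; [lia | | | lia]; exfalso; simpl in Hv.
  - apply (Hirr v). rewrite <- Hv at 2. apply arc_succ.
  - apply (Hirr v). rewrite (Hanti v (s v)) at 2; [apply arc_succ | apply arc_succ |].
    rewrite <- Hv at 2. apply arc_succ.
Qed.

Lemma iter_injective_below_period v k :
  (forall j, 0 < j -> Nat.iter j s v = v -> k <= j) ->
  Nat.iter k s v = v ->
  forall i j, i < k -> j < k -> Nat.iter i s v = Nat.iter j s v -> i = j.
Proof.
  intros Hmin Hv.
  assert (Hlt : forall i j, i < j -> j < k -> Nat.iter i s v <> Nat.iter j s v).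
  { intros i j Hij Hj Heq.
    assert (Hret : Nat.iter (k - j + i) s v = v).
    { rewrite Nat.iter_add, Heq, <- Nat.iter_add, Nat.sub_add by lia. exact Hv. }
    specialize (Hmin (k - j + i) ltac:(lia) Hret). lia. }
  intros i j Hi Hj Heq. destruct (lt_eq_lt_dec i j) as [[Hij | ] | Hij]; auto.
  - contradiction (Hlt _ _ Hij Hj Heq).
  - contradiction (Hlt _ _ Hij Hi (eq_sym Heq)).
Qed.

Lemma directed_cycle_of_periodic : has_periodic_point -> directed_cycle E.
Proof.
  intros [v [k0 Hk0]].
  destruct (dec_inh_nat_subset_has_unique_least_element
              (fun k => 0 < k /\ Nat.iter k s v = v) (fun k => classic _) (ex_intro _ k0 Hk0))
    as [k [[[Hk Hv] Hmin] _]].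
  assert (Hmod := iter_mod s v k Hv).
  exists k, (fun i => Nat.iter i s v). split; [|split; [|split]].
  - exact (period_ge_3 v k Hk Hv).
  - apply (iter_injective_below_period v k); [|exact Hv].
    intros j Hj Hjv. exact (Hmin j (conj Hj Hjv)).
  - intros w. destruct (orbit_covers v k Hk Hv w) as [i ->].
    exists (i mod k). split; [apply Nat.mod_upper_bound; lia | symmetry; apply Hmod].
  - intros x y. split.
    + intros Hxy. destruct (orbit_covers v k Hk Hv x) as [i ->].
      exists (i mod k). split; [apply Nat.mod_upper_bound; lia | split; [apply Hmod |]].
      rewrite (Hs _ _) in Hxy. rewrite Hxy, <- Hmod, Nat.iter_succ, <- Hmod. reflexivity.
    + intros [i [_ [-> ->]]]. apply Hs. rewrite <- Hmod. reflexivity.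
Qed.

Lemma functional_tree_or_cycle (x : V) :
  (is_tree E /\ @infinite_vertices V) \/ directed_cycle E.
Proof.
  destruct (classic has_periodic_point) as [Hp | Hnp].
  - right. exact (directed_cycle_of_periodic Hp).
  - left. split; [split; [exact Hconn |] |].
    + intros l Hl. exact (Hnp (undirected_cycle_periodic l Hl)).
    + exact (infinite_of_injective _ (iter_injective_of_aperiodic x Hnp)).
Qed.

End Periodic.
End Functional.

Section Transpose.
Variables (V : Type) (E : V -> V -> Prop).

Lemma adj_transp a b : adj (transp V E) a b <-> adj E a b.
Proof. unfold adj, transp; tauto. Qed.

Lemma connected_in_transp A : connected_in (transp V E) A <-> connected_in E A.
Proof.
  split; intros H a b Ha Hb; eapply clos_refl_trans_mono; try exact (H a b Ha Hb);
    intros u w [Hu [Hw Huw]]; repeat split; auto; apply adj_transp; exact Huw.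
Qed.

Lemma is_digraph_transp : is_digraph E -> is_digraph (transp V E).
Proof. intros [Hirr Hanti]; split; unfold transp; auto. Qed.

Lemma C_homogeneous_transp : C_homogeneous E -> C_homogeneous (transp V E).
Proof.
  intros HC A B f HA HB CA CB [Hmap [Hinj [Hsurj Hedge]]].
  destruct (HC A B f HA HB (proj1 (connected_in_transp A) CA) (proj1 (connected_in_transp B) CB))
    as [g [[Hginj [Hgsurj Hgedge]] Hgf]].
  - split; [|split; [|split]]; auto. intros a a' Ha Ha'. exact (Hedge a' a Ha' Ha).
  - exists g. split; [split; [|split] |]; auto. intros x y. exact (Hgedge y x).
Qed.

Lemma undirected_cycle_transp l : undirected_cycle E l -> undirected_cycle (transp V E) l.
Proof.
  intros [Hlen [Hnd [Hcons [u [w [Hhd [Hlast Hwu]]]]]]]. repeat split; auto.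
  - intros i Hi. destruct (Hcons i Hi) as [u' [w' [Hu [Hw Huw]]]].
    exists u', w'. repeat split; auto. apply adj_transp; exact Huw.
  - exists u, w. repeat split; auto. apply adj_transp; exact Hwu.
Qed.

Lemma directed_cycle_of_transp : directed_cycle (transp V E) -> directed_cycle E.
Proof.
  intros [n [f [Hn [Hinj [Hsurj Hedge]]]]].
  exists n, (fun i => f (n - 1 - i)). split; [|split; [|split]]; auto.
  - intros i j Hi Hj Heq. apply Hinj in Heq; lia.
  - intros v. destruct (Hsurj v) as [i [Hi <-]]. exists (n - 1 - i). split; [lia|]. f_equal; lia.
  - intros x y. split.
    + intros Hxy. destruct (proj1 (Hedge y x) Hxy) as [i [Hi [-> ->]]].
      assert (Hsi : S i mod n < n) by (apply Nat.mod_upper_bound; lia).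
      exists (n - 1 - S i mod n). split; [lia|].
      rewrite succ_mod_rev by exact Hi. split; f_equal; lia.
    + intros [j [Hj [-> ->]]]. apply Hedge.
      assert (Hsj : S j mod n < n) by (apply Nat.mod_upper_bound; lia).
      exists (n - 1 - S j mod n). split; [lia|].
      rewrite succ_mod_rev by exact Hj. split; [reflexivity | f_equal; lia].
Qed.

End Transpose.

Theorem lemma4p1 (V : Type) (E : V -> V -> Prop) (x : V) :
  is_digraph E -> locally_finite E -> connected E -> C_homogeneous E ->
  (singleton_set (out_nbh E x) \/ singleton_set (in_nbh E x)) ->
  (is_tree E /\ @infinite_vertices V) \/ directed_cycle E.
Proof.
  intros HE _ Hconn HC [Hout | Hin].
  - destruct (functional_of_singleton_out_nbh V E HE HC x Hout) as [s Hs].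
    exact (functional_tree_or_cycle V E s HE Hs Hconn HC x).
  - assert (HE' := is_digraph_transp V E HE).
    assert (HC' := C_homogeneous_transp V E HC).
    assert (Hconn' : connected (transp V E)) by (apply connected_in_transp; exact Hconn).
    destruct (functional_of_singleton_out_nbh V _ HE' HC' x Hin) as [s Hs].
    destruct (functional_tree_or_cycle V _ s HE' Hs Hconn' HC' x)
      as [[[_ Hacyclic] Hinf] | Hcycle].
    + left. repeat split; auto. intros l Hl. exact (Hacyclic l (undirected_cycle_transp V E l Hl)).
    + right. exact (directed_cycle_of_transp V E Hcycle).
Qed.
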